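(* Let $n,m\in\mathbb{N}$, $p\in(0,1]$, and let $f$ be a score function single-peaked at $p$. Let $\eta\in\mathbb{N}$. If there exists a set of static documents $T\subseteq D$ with $|T|=\eta$ such that the corpus-enriched game $G_T=\langle n,m,p,T\rangle$ has a pure equilibrium, then there exists a threshold vector $\vec t\in[0,1]^m$ with $\|\vec t\|_1=\sum_{j=1}^m \vec t_j\le \eta$ such that the ranking game with thresholds $G_{\vec t}=\langle n,m,p,\vec t\rangle$ has a pure equilibrium.
   Context: Setting: $n$ players (publishers), $m$ queries $q_1,\dots,q_m$, a peak value $p\in(0,1]$ and a score function $f:[0,1]\to[0,1]$ single-peaked at $p$ ($p$ is the unique point such that $f$ is non-decreasing on $[0,p]$ and non-increasing on $[p,1]$). Each player $i$ chooses a document $d_i\in D=\{d=(d^1,\dots,d^m)\in[0,1]^m:\sum_j d^j\le 1\}$; its score for $q_j$ is $f(d_i^j)$. A strategy profile is $s=(d_1,\dots,d_n)$. Each winner of a query shares it uniformly: if $q_j$ has $h_j$ winners each gets $1/h_j$; a player's utility is the sum of its shares over queries. Corpus-enriched game $G_T=\langle n,m,p,T\rangle$: $T\subseteq D$ is a finite set of static (dummy) documents; a player's document can be top-ranked for $q_j$ only if its score is at least $\max_{d\in T}f(d^j)$ (ties with static documents are broken in favour of players); among such player documents, those of highest score are the winners of $q_j$; if none, no player wins $q_j$. Ranking game with thresholds $G_{\vec t}=\langle n,m,p,\vec t\rangle$, $\vec t\in[0,1]^m$: player $i$'s document is eligible for $q_j$ iff $d_i^j\ge\vec t_j$; among eligible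 player documents those of highest score win $q_j$ (uniform sharing); if none is eligible, no player wins $q_j$. In either game, a pure equilibrium is a pure Nash equilibrium (no player can strictly increase her utility by unilaterally changing her document) in which every query is won by at least one player. *)

From HB Require Import structures.
From mathcomp Require Import all_boot all_order all_algebra.
From mathcomp Require Import reals.
Set Implicit Arguments. Unset Strict Implicit. Unset Printing Implicit Defensive.
Import Order.TTheory GRing.Theory Num.Theory.
Local Open Scope ring_scope.

Section Games.
Variable R : realType.

Definition doc (m : nat) := {ffun 'I_m -> R}.

Definition in_D (m : nat) (d : doc m) : Prop :=
  (forall j, 0 <= d j <= 1) /\ \sum_(j < m) d j <= 1.

Definition peak_shape (f : R -> R) (q : R) : Prop :=
  (forall x y, 0 <= x -> x <= y -> y <= q -> f x <= f y) /\
  (forall x y, q <= x -> x <= y -> y <= 1 -> f y <= f x).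

Definition single_peaked (f : R -> R) (p : R) : Prop :=
  (forall x, 0 <= x <= 1 -> 0 <= f x <= 1) /\
  0 <= p <= 1 /\ peak_shape f p /\
  (forall q, 0 <= q <= 1 -> peak_shape f q -> q = p).

Definition profile (n m : nat) := 'I_n -> doc m.

Definition deviate n m (s : profile n m) (i : 'I_n) (d : doc m) : profile n m :=
  fun k => if k == i then d else s k.

(* Generic game: [elig j d] says the player document d is eligible for q_j.
   Among eligible player documents, those of highest score f (d j) win. *)
Definition wins n m (f : R -> R) (elig : 'I_m -> doc m -> bool)
    (s : profile n m) (i : 'I_n) (j : 'I_m) : bool :=
  elig j (s i) && [forall k : 'I_n, elig j (s k) ==> (f (s k j) <= f (s i j))].

Definition nwinners n m f elig (s : profile n m) (j : 'I_m) : nat :=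
  #|[set k : 'I_n | wins f elig s k j]|.

Definition utility n m f elig (s : profile n m) (i : 'I_n) : R :=
  \sum_(j < m) (if wins f elig s i j then (nwinners f elig s j)%:R^-1 else 0).

Definition pure_equilibrium n m f elig (s : profile n m) : Prop :=
  (forall i, in_D (s i)) /\
  (forall (i : 'I_n) (d : doc m), in_D d ->
      utility f elig (deviate s i d) i <= utility f elig s i) /\
  (forall j : 'I_m, exists i : 'I_n, wins f elig s i j).

Definition has_pure_equilibrium n m f (elig : 'I_m -> doc m -> bool) : Prop :=
  exists s : profile n m, pure_equilibrium f elig s.

(* Corpus-enriched game G_T: a player document is eligible for q_j iff its
   score is at least the score of every static document (ties favour players). *)
Definition corpus_elig m (f : R -> R) (T : seq (doc m)) (j : 'I_m) (d : doc m) : bool :=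
  all (fun t : doc m => f (t j) <= f (d j)) T.

Definition thr_elig m (t : 'I_m -> R) (j : 'I_m) (d : doc m) : bool :=
  t j <= d j.

End Games.

From HB Require Import structures.
From mathcomp Require Import all_boot all_order all_algebra.
From mathcomp Require Import reals.
Import Order.TTheory GRing.Theory Num.Theory.
Local Open Scope ring_scope.

(* Let s be an equilibrium of G_T. On query q_j take as threshold t_j the least
   value x <= p among 0, the players' values s_k^j and the static values d^j
   whose score f x dominates every static score. Every document of s that is
   eligible in G_T passes t_j, and since f is non-decreasing on [0, p], any
   document passing t_j becomes eligible in G_T once its coordinates are
   truncated at p, which does not lower its scores. Hence s has the same
   winners in both games, and a profitable deviation in G_t would give, after
   truncation, a deviation at least as profitable in G_T. Finally t_j is at
   most the value on q_j of the best static document (0 if there is none), so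
   sum_j t_j <= sum_(d in T) sum_j d^j <= |T|. *)

Set Implicit Arguments. Unset Strict Implicit.

Lemma seq_argmax (T : eqType) (R : realDomainType) (g : T -> R) (s : seq T) :
  s != [::] -> exists2 x, x \in s & forall y, y \in s -> g y <= g x.
Proof.
elim: s => // a s IH _; have [->|/IH[x xs xmax]] := eqVneq s [::].
  by exists a => [|y]; rewrite ?mem_seq1 // => /eqP->.
have [gax|gxa] := lerP (g a) (g x).
  by exists x => [|y]; rewrite inE ?xs ?orbT // => /predU1P[->|/xmax].
exists a => [|y]; rewrite inE ?eqxx // => /predU1P[->//|/xmax gyx].
exact: le_trans gyx (ltW gxa).
Qed.

Lemma le_sum_seq_ge0 (T : eqType) (R : numDomainType) (F : T -> R) (s : seq T) x :
  x \in s -> (forall y, y \in s -> 0 <= F y) -> F x <= \sum_(y <- s) F y.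
Proof.
move=> xs F_ge0; rewrite (big_rem _ xs) /= lerDl big_seq_cond.
by apply: sumr_ge0 => y /andP[/mem_rem /F_ge0].
Qed.

Lemma single_peaked_max (R : realType) (f : R -> R) (p : R) :
  single_peaked f p -> forall x, 0 <= x <= 1 -> f x <= f p.
Proof.
case=> _ [_ [[inc dec] _]] x /andP[x0 x1].
by case: (lerP x p) => [xp|/ltW px]; [exact: inc | exact: dec].
Qed.

Section Threshold.
Variables (R : realType) (f : R -> R) (p : R).
Hypothesis f_peak : single_peaked f p.

Definition dominates (ys : seq R) (x : R) : bool := all (fun y => f y <= f x) ys.

Variables (ys xs : seq R).
Hypothesis ys_in01 : forall y, y \in ys -> 0 <= y <= 1.

Let admissible (x : R) : bool := (0 <= x <= p) && dominates ys x.

(* The candidate 0 makes the threshold vanish when there are no static values;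
   the default p is always admissible. *)
Definition threshold : R := \big[Num.min/p]_(x <- 0 :: xs ++ ys | admissible x) x.

Lemma threshold_admissible : (0 <= threshold <= p) && dominates ys threshold.
Proof.
have [_ [/andP[p0 _] _]] := f_peak.
apply: (big_ind admissible) => [|x y|//].
- by rewrite /admissible p0 lexx; apply/allP => y /ys_in01; exact: single_peaked_max.
- by rewrite minEle; case: ifP.
Qed.

Lemma threshold_le x :
  x \in xs ++ ys -> 0 <= x -> dominates ys x -> threshold <= x.
Proof.
move=> x_in x0 dom_x; have [xp|px] := lerP x p.
  by apply: ge_bigmin_seq; rewrite ?inE ?x_in ?orbT // /admissible x0 xp.
exact: le_trans (bigmin_le_id _ _ _ _) (ltW px).
Qed.

Lemma threshold_le_sum : threshold <= \sum_(y <- ys) y.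
Proof.
have [_ [/andP[p0 _] _]] := f_peak.
have [ys_nil|ys_nil] := eqVneq ys [::].
  rewrite ys_nil big_nil; apply: ge_bigmin_seq; first exact: mem_head.
  by rewrite /admissible lexx p0 ys_nil.
have [y0 y0_in y0_max] := seq_argmax f ys_nil.
have ys_ge0 y : y \in ys -> 0 <= y by move/ys_in01/andP=> [].
apply: le_trans (le_sum_seq_ge0 y0_in ys_ge0).
by apply: threshold_le; rewrite ?mem_cat ?y0_in ?orbT ?ys_ge0 //; apply/allP.
Qed.

Lemma dominates_above_threshold x : threshold <= x <= p -> dominates ys x.
Proof.
case: f_peak => _ [_ [[inc _] _]] /andP[tx xp].
case/andP: threshold_admissible => /andP[t0 _] /allP dom_t.
by apply/allP => y /dom_t le_fy; apply: le_trans le_fy (inc _ _ t0 tx xp).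
Qed.

End Threshold.

Section Games.
Variables (R : realType) (n m : nat) (f : R -> R).
Implicit Types (e : 'I_m -> doc R m -> bool) (s : profile R n m).

Definition winners e s (j : 'I_m) : {set 'I_n} := [set k | wins f e s k j].

Lemma utility_le_winners_subset e1 e2 s1 s2 i :
  (forall j, wins f e1 s1 i j ->
     wins f e2 s2 i j /\ winners e2 s2 j \subset winners e1 s1 j) ->
  utility f e1 s1 i <= utility f e2 s2 i.
Proof.
move=> sub; apply: ler_sum => j _.
case w1: (wins f e1 s1 i j); last by case: ifP => _; rewrite ?invr_ge0.
have [w2 w_sub] := sub j w1.
have w2_gt0 : (0 < nwinners f e2 s2 j)%N by apply/card_gt0P; exists i; rewrite inE.
have w_le := subset_leq_card w_sub.
by rewrite w2 lef_pV2 ?posrE ?ltr0n ?ler_nat // (leq_trans w2_gt0).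
Qed.

Definition score_closed e : Prop :=
  forall j (d d' : doc R m), e j d -> f (d j) <= f (d' j) -> e j d'.

Lemma score_closed_ineligible_lt e j (d d' : doc R m) :
  score_closed e -> ~~ e j d -> e j d' -> f (d j) < f (d' j).
Proof.
move=> e_closed /negP e_d e_d'; rewrite ltNge; apply/negP => le_d'd.
exact: e_d (e_closed _ _ _ e_d' le_d'd).
Qed.

Variables (e1 e2 : 'I_m -> doc R m -> bool) (s : profile R n m).
Hypotheses (e2_closed : score_closed e2)
  (e2_sub_e1 : forall j k, e2 j (s k) -> e1 j (s k)).

Lemma wins_eq j :
  (exists w, wins f e2 s w j) -> forall i, wins f e1 s i j = wins f e2 s i j.
Proof.
move=> [w /andP[e2w _]] i; apply/idP/idP => /andP[elig_i /forallP i_max].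
  have fwi : f (s w j) <= f (s i j) := implyP (i_max w) (e2_sub_e1 e2w).
  rewrite /wins (e2_closed e2w fwi); apply/forallP => k.
  by apply/implyP => /e2_sub_e1; apply/implyP.
rewrite /wins e2_sub_e1 //=; apply/forallP => k; apply/implyP => _.
have [e2k|ne2k] := boolP (e2 j (s k)); first exact: implyP (i_max k) e2k.
exact/ltW/(score_closed_ineligible_lt e2_closed).
Qed.

Lemma wins_deviate i (d d' : doc R m) j :
  wins f e1 (deviate s i d) i j -> e2 j d' -> f (d j) <= f (d' j) ->
  wins f e2 (deviate s i d') i j /\
  winners e2 (deviate s i d') j \subset winners e1 (deviate s i d) j.
Proof.
have dev_i x : deviate s i x i = x by rewrite /deviate eqxx.
have dev_k x k : k != i -> deviate s i x k = s k by move/negbTE; rewrite /deviate => ->.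
move=> w1 e2d' fdd'; have /andP[_ /forallP d_max] := w1; rewrite dev_i in d_max.
have s_le_d k : k != i -> e2 j (s k) -> f (s k j) <= f (d j).
  by move=> ki /e2_sub_e1; have := implyP (d_max k); rewrite dev_k.
split.
  rewrite /wins dev_i e2d'; apply/forallP => k; apply/implyP.
  have [->|ki] := eqVneq k i; first by rewrite dev_i.
  by rewrite dev_k // => /(s_le_d k ki)/le_trans; apply.
apply/subsetP => k; rewrite !inE; have [->//|ki] := eqVneq k i.
rewrite /wins !dev_k // => /andP[e2k /forallP k_max]; rewrite e2_sub_e1 //=.
apply/forallP => l; apply/implyP => _.
have [->|li] := eqVneq l i.
  by rewrite dev_i; apply: le_trans fdd' _; have := implyP (k_max i); rewrite dev_i; apply.
rewrite dev_k //; have [e2l|ne2l] := boolP (e2 j (s l)).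
  by have := implyP (k_max l); rewrite dev_k //; apply.
exact/ltW/(score_closed_ineligible_lt e2_closed).
Qed.

Lemma pure_equilibrium_transfer :
  pure_equilibrium f e2 s ->
  (forall d, in_D d -> exists2 d', in_D d' &
     forall j, e1 j d -> e2 j d' /\ f (d j) <= f (d' j)) ->
  pure_equilibrium f e1 s.
Proof.
case=> s_D [s_stable s_cover] improve.
have w_eq j := wins_eq (s_cover j).
have u_eq i : utility f e1 s i = utility f e2 s i.
  apply: eq_bigr => j _; rewrite w_eq /nwinners.
  by rewrite (eq_card (B := [set k | wins f e2 s k j])) // => k; rewrite !inE w_eq.
split=> //; split=> [i d dD|j]; last first.
  by have [w w_wins] := s_cover j; exists w; rewrite w_eq.
have [d' d'D d'_better] := improve d dD.
rewrite u_eq; apply: le_trans (s_stable i d' d'D).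
apply: utility_le_winners_subset => j w1.
have /andP[e1d _] := w1; rewrite /deviate eqxx in e1d.
by have [e2d' fdd'] := d'_better j e1d; apply: wins_deviate.
Qed.

End Games.

Section CorpusThreshold.
Variables (R : realType) (n m : nat) (f : R -> R) (p : R).
Hypothesis f_peak : single_peaked f p.

Definition truncate (d : doc R m) : doc R m := [ffun j => Num.min (d j) p].

Lemma truncate_in_D (d : doc R m) : in_D d -> in_D (truncate d).
Proof.
have [_ [/andP[p0 p1] _]] := f_peak; case=> d01 d_sum; split.
  by move=> j; rewrite ffunE le_min ge_min; have /andP[-> ->] := d01 j; rewrite p0.
by apply: le_trans d_sum; apply: ler_sum => j _; rewrite ffunE ge_min lexx.
Qed.

Lemma score_le_truncate (d : doc R m) j : 0 <= d j <= 1 -> f (d j) <= f (truncate d j).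
Proof.
move=> dj01; rewrite ffunE minEle; case: ifP => // /negbT; rewrite -ltNge => _.
exact: single_peaked_max.
Qed.

Lemma corpus_eligE (T : seq (doc R m)) j (d : doc R m) :
  corpus_elig f T j d = dominates f [seq e j | e : doc R m <- T] (d j).
Proof. by rewrite /corpus_elig /dominates all_map. Qed.

Lemma corpus_elig_score_closed (T : seq (doc R m)) : score_closed f (corpus_elig f T).
Proof.
move=> j d d' /allP dom_d le_dd'; apply/allP => e /dom_d.
by move/le_trans; apply.
Qed.

Variables (T : seq (doc R m)) (s : profile R n m).
Hypotheses (T_D : forall d, d \in T -> in_D d) (s_D : forall k, in_D (s k)).

Let static j : seq R := [seq d j | d : doc R m <- T].
Let played j : seq R := [seq s k j | k <- enum 'I_n].

Definition corpus_threshold (j : 'I_m) : R := threshold f p (static j) (played j).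

Let static_in01 j y : y \in static j -> 0 <= y <= 1.
Proof. by case/mapP=> d /T_D[d01 _] ->. Qed.

Let corpus_threshold_admissible j :
  (0 <= corpus_threshold j <= p) && dominates f (static j) (corpus_threshold j).
Proof. exact: (threshold_admissible f_peak (played j) (static_in01 (j := j))). Qed.

Lemma corpus_threshold_in01 j : 0 <= corpus_threshold j <= 1.
Proof.
have [_ [/andP[_ p1] _]] := f_peak.
have /andP[/andP[-> t_p] _] := corpus_threshold_admissible j.
exact: le_trans p1.
Qed.

Lemma sum_corpus_threshold : \sum_(j < m) corpus_threshold j <= (size T)%:R.
Proof.
apply: (@le_trans _ _ (\sum_(j < m) \sum_(d <- T) d j)).
  apply: ler_sum => j _; rewrite -(big_map (fun d : doc R m => d j) predT id).
  exact: (threshold_le_sum f_peak (played j) (static_in01 (j := j))).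
rewrite exchange_big /= -sum1_size natr_sum big_seq [leRHS]big_seq.
by apply: ler_sum => d /T_D[].
Qed.

Lemma thr_elig_corpus_threshold j k :
  corpus_elig f T j (s k) -> thr_elig corpus_threshold j (s k).
Proof.
rewrite corpus_eligE /thr_elig => dom; apply: threshold_le => //.
- by rewrite mem_cat; apply/orP; left; apply: map_f; rewrite mem_enum.
- by have [/(_ j)/andP[]] := s_D k.
Qed.

Lemma corpus_elig_truncate j (d : doc R m) :
  thr_elig corpus_threshold j d -> corpus_elig f T j (truncate d).
Proof.
rewrite corpus_eligE /thr_elig => t_d.
apply: (dominates_above_threshold f_peak (static_in01 (j := j)) (xs := played j)).
have /andP[/andP[_ t_p] _] := corpus_threshold_admissible j.
by rewrite ffunE le_min t_d t_p ge_min lexx orbT.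
Qed.

End CorpusThreshold.

Unset Implicit Arguments. Set Strict Implicit.

Theorem lemma1 (R : realType) (n m : nat) (p : R) (f : R -> R) (eta : nat) :
  0 < p <= 1 ->
  single_peaked f p ->
  (exists T : seq (doc R m),
      [/\ uniq T, size T = eta, (forall d, d \in T -> in_D d) &
          @has_pure_equilibrium R n m f (corpus_elig f T)]) ->
  exists t : 'I_m -> R,
    [/\ (forall j, 0 <= t j <= 1), \sum_(j < m) t j <= eta%:R &
        @has_pure_equilibrium R n m f (thr_elig t)].
Proof.
move=> _ f_peak [T [_ <- T_D [s s_eq]]].
have s_D : forall k, in_D (s k) by case: s_eq.
exists (corpus_threshold f p T s); split.
- exact: corpus_threshold_in01.
- exact: sum_corpus_threshold.
exists s; apply: (pure_equilibrium_transfer _ _ s_eq).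
- exact: corpus_elig_score_closed.
- exact: thr_elig_corpus_threshold.
move=> d d_D; exists (truncate p d); first exact: (truncate_in_D f_peak d_D).
move=> j t_d; split; first exact: (corpus_elig_truncate f_peak T_D t_d).
by apply: score_le_truncate; case: d_D.
Qed.
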